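(* Let $O\colon[0,1]^2\to[0,1]$ be a commutative binary function that is non-decreasing in each variable. If $x,y,z\in[0,1]$ satisfy $O(x,y)\in\{x,y\}$, $O(x,z)\in\{x,z\}$ and $O(y,z)\in\{y,z\}$, then $O(O(x,y),z)=O(O(y,z),x)=O(O(x,z),y)$. *)

From Stdlib Require Export Reals.
Open Scope R_scope.

Definition in01 (x : R) : Prop := 0 <= x <= 1.

(* A binary function O : [0,1]^2 -> [0,1], represented as a total function
   R -> R -> R whose behaviour is only constrained on [0,1]^2. *)
Definition maps_unit_square (O : R -> R -> R) : Prop :=
  forall x y, in01 x -> in01 y -> in01 (O x y).

Definition commutative_on01 (O : R -> R -> R) : Prop :=
  forall x y, in01 x -> in01 y -> O x y = O y x.

Definition nondecreasing_on01 (O : R -> R -> R) : Prop :=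
  (forall x1 x2 y, in01 x1 -> in01 x2 -> in01 y -> x1 <= x2 -> O x1 y <= O x2 y) /\
  (forall x y1 y2, in01 x -> in01 y1 -> in01 y2 -> y1 <= y2 -> O x y1 <= O x y2).

(* On a triple whose pairs are conservative, every two-step evaluation is one
   of the pairwise values, so associativity can only fail through a strict
   absorption cycle: x absorbs y, y absorbs z and z absorbs x.  Monotonicity
   forbids such a cycle, since comparing x with z and feeding the result through
   the three absorptions squeezes x and z together. *)
From Stdlib Require Import Reals Lra.
Open Scope R_scope.

Section ConservativeTriple.

Variable D : R -> Prop.
Variable O : R -> R -> R.
Hypothesis O_comm : forall a b, D a -> D b -> O a b = O b a.
Hypothesis O_monol : forall a1 a2 b, D a1 -> D a2 -> D b -> a1 <= a2 -> O a1 b <= O a2 b.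

Lemma O_monor a b1 b2 : D a -> D b1 -> D b2 -> b1 <= b2 -> O a b1 <= O a b2.
Proof.
  intros ha hb1 hb2 hb.
  rewrite (O_comm a b1), (O_comm a b2) by assumption.
  now apply O_monol.
Qed.

Lemma absorption_cycle_trivial x y z : D x -> D y -> D z ->
  O x y = x -> O y z = y -> O z x = z -> x = z.
Proof.
  intros hx hy hz Exy Eyz Ezx.
  assert (Eyx : O y x = x) by now rewrite O_comm.
  assert (Ezy : O z y = y) by now rewrite O_comm.
  assert (Exz : O x z = z) by now rewrite O_comm.
  destruct (Rle_or_lt x z) as [hxz | hzx].
  - pose proof (O_monol x z y hx hz hy hxz) as hxy; rewrite Exy, Ezy in hxy.
    pose proof (O_monol x y z hx hy hz hxy) as hzy; rewrite Exz, Eyz in hzy.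
    pose proof (O_monor x z y hx hz hy hzy) as hzx; rewrite Exz, Exy in hzx.
    lra.
  - pose proof (O_monol z x y hz hx hy (Rlt_le _ _ hzx)) as hyx; rewrite Ezy, Exy in hyx.
    pose proof (O_monol y x z hy hx hz hyx) as hyz; rewrite Eyz, Exz in hyz.
    pose proof (O_monor x y z hx hy hz hyz) as hxz; rewrite Exy, Exz in hxz.
    lra.
Qed.

Lemma conservative_assoc x y z : D x -> D y -> D z ->
  (O x y = x \/ O x y = y) -> (O x z = x \/ O x z = z) -> (O y z = y \/ O y z = z) ->
  O (O x y) z = O x (O y z).
Proof.
  intros hx hy hz [Exy | Exy] Hxz [Eyz | Eyz]; rewrite Exy, Eyz, ?Exy; try reflexivity.
  - destruct Hxz as [Exz | Exz]; [congruence |].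
    assert (x = z).
    { apply (absorption_cycle_trivial x y z); auto. now rewrite O_comm. }
    congruence.
  - destruct Hxz as [Exz | Exz]; [| congruence].
    assert (z = x).
    { apply (absorption_cycle_trivial z y x); auto; rewrite O_comm; auto. }
    congruence.
Qed.

End ConservativeTriple.

Theorem corollary1 (O : R -> R -> R)
  (Hrange : maps_unit_square O)
  (Hcomm : commutative_on01 O)
  (Hmono : nondecreasing_on01 O)
  (x y z : R) (hx : in01 x) (hy : in01 y) (hz : in01 z)
  (Hxy : O x y = x \/ O x y = y)
  (Hxz : O x z = x \/ O x z = z)
  (Hyz : O y z = y \/ O y z = z) :
  O (O x y) z = O (O y z) x /\ O (O y z) x = O (O x z) y.
Proof.
  destruct Hmono as [Hmonol _].
  assert (Hzy : O z y = z \/ O z y = y) by (rewrite Hcomm; tauto).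
  assert (hyz : in01 (O y z)) by (destruct Hyz as [-> | ->]; assumption).
  split.
  - rewrite (conservative_assoc in01 O Hcomm Hmonol x y z) by assumption.
    now apply Hcomm.
  - rewrite (conservative_assoc in01 O Hcomm Hmonol x z y), (Hcomm z y) by assumption.
    now apply Hcomm.
Qed.
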